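(* Let $k$ be a positive integer, and $G$ an edge-colored graph of order $n\geq 105k-24$ such that $|CN(u)\cup CN(v)|\geq n-1$ for every pair of vertices $u$ and $v$ in $V(G)$. Then $G$ contains $k$ (distinct) rainbow $C_4$'s.
   Context: An edge-colored graph is a finite simple graph $G$ with a map $C:E(G)\to\mathbb{N}$. For $v\in V(G)$, the color neighborhood $CN(v)$ is the set of colors assigned to edges incident to $v$. A subgraph is rainbow if all its edges have distinct colors; $C_4$ denotes a cycle of length 4. *)

From mathcomp Require Import all_boot.
Set Implicit Arguments. Unset Strict Implicit. Unset Printing Implicit Defensive.

(* An edge coloring is C : T -> T -> nat, where only the
   values C u v with e u v matter, and C u v = C v u on edges. *)
Definition simple_graph (T : finType) (e : rel T) : Prop :=
  irreflexive e /\ symmetric e.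

Definition edge_coloring (T : finType) (e : rel T) (C : T -> T -> nat) : Prop :=
  forall u v, e u v -> C u v = C v u.

Definition CN (T : finType) (e : rel T) (C : T -> T -> nat) (v : T) : seq nat :=
  undup [seq C v u | u <- enum T & e v u].

Definition CN_union_card (T : finType) (e : rel T) (C : T -> T -> nat) (u v : T) : nat :=
  size (undup (CN e C u ++ CN e C v)).

Definition C4_edges (T : finType) (a b c d : T) : {set {set T}} :=
  [set [set a; b]; [set b; c]; [set c; d]; [set d; a]].

Definition rainbow_C4 (T : finType) (e : rel T) (C : T -> T -> nat)
    (S : {set {set T}}) : Prop :=
  exists a b c d : T,
    uniq [:: a; b; c; d] /\
    [&& e a b, e b c, e c d & e d a] /\
    uniq [:: C a b; C b c; C c d; C d a] /\
    S = C4_edges a b c d.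

From mathcomp Require Import all_boot zify.
Set Implicit Arguments. Unset Strict Implicit. Unset Printing Implicit Defensive.

(* Removing one edge from each rainbow C4 found so far lowers every
   |CN(u) ∪ CN(v)| by at most the number of removed edges, so it suffices to
   find one rainbow C4 when n >= 105m + 81 and |CN(u) ∪ CN(v)| >= n - 1 - m.
   Suppose there is none.  Call a vertex rich when 2|CN(v)| >= n - 1 - m; all
   vertices but at most one are rich.  Without rainbow C4, any two bichromatic
   common neighbours x of u and w (C(ux) <> C(wx)) share a colour.  Hence the
   edges from u and w into any set Y carry at most |Y| + 2 colours, which
   (taking Y outside a monochromatic star at a rich u) bounds such stars by
   m + 4; and all bichromatic common neighbours of u and w lie in four
   monochromatic stars, so two rich vertices have at most 4(m + 4) of them.
   On the other hand a rich x has about |CN(x)|^2 >= (n - m)^2 / 4 pairs of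
   rich neighbours u, w with C(xu) <> C(xw).  Double counting gives
   (n - m - 3)(n - m - 5) <= 16(m + 4)n, which fails for n >= 105m + 81. *)

Lemma size_undup_subset (X : eqType) (s1 s2 : seq X) :
  {subset s1 <= s2} -> size (undup s1) <= size s2.
Proof.
move=> sub12; apply: leq_trans (size_undup s2).
by apply: uniq_leq_size (undup_uniq s1) _ => x; rewrite !mem_undup => /sub12.
Qed.

Lemma card_set_sum (X : finType) (P : pred X) : #|[set x | P x]| = \sum_x (P x : nat).
Proof. by rewrite -sum1dep_card big_mkcond; apply: eq_bigr => x _; case: (P x). Qed.

Lemma card_bigcup_seq_le (X : finType) (I : Type) (A : I -> {set X}) (cs : seq I) K :
  (forall c, #|A c| <= K) -> #|\bigcup_(c <- cs) A c| <= size cs * K.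
Proof.
move=> AK; elim: cs => [|c cs IH]; first by rewrite big_nil cards0.
by rewrite big_cons mulSn (leq_trans (leq_card_setU _ _)) // leq_add.
Qed.

Lemma mem_bigcup_seq (X : finType) (I : eqType) (A : I -> {set X}) cs c x :
  c \in cs -> x \in A c -> x \in \bigcup_(i <- cs) A i.
Proof.
move=> + xA; elim: cs => [|i cs IH] //; rewrite big_cons inE !in_setU.
by case/orP=> [/eqP <- | /IH ->]; rewrite ?xA ?orbT.
Qed.

Lemma hitting_set_exists (X : finType) (F : {set {set X}}) :
  exists2 D : {set X}, #|D| <= #|F| &
    forall S, S \in F -> S != set0 -> ~~ [disjoint S & D].
Proof.
pose s := pmap (fun S : {set X} => [pick x in S]) (enum F).
exists [set x in s].
  rewrite cardsE (leq_trans (card_size s)) // cardE.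
  by rewrite size_pmap count_size.
move=> S SF /set0Pn[x0 x0S].
have [x xS pickS] : exists2 x, x \in S & [pick x in S] = Some x.
  by case: pickP => [x xS | /(_ x0)]; [exists x | rewrite /= x0S].
apply/pred0Pn; exists x; rewrite /= xS inE mem_pmap.
by apply/mapP; exists S; rewrite ?mem_enum.
Qed.

Definition pair_colour (X : finType) (C : X -> X -> nat) (P : {set X}) : nat :=
  if [pick x in P] is Some x then
    if [pick y in P :\ x] is Some y then C x y else 0
  else 0.

Lemma pair_colour2 (X : finType) (C : X -> X -> nat) (a b : X) :
  a != b -> C a b = C b a -> pair_colour C [set a; b] = C a b.
Proof.
move=> ab Cab; rewrite /pair_colour.
case: pickP => [x | /(_ a)]; last by rewrite !inE eqxx.
rewrite !inE => /orP[]/eqP->.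
- case: pickP => [y | /(_ b)]; last by rewrite !inE eqxx orbT andbT eq_sym ab.
  by rewrite !inE => /andP[ya /orP[]/eqP yE]; [rewrite yE eqxx in ya | rewrite yE].
- case: pickP => [y | /(_ a)]; last by rewrite !inE eqxx andbT ab.
  by rewrite !inE => /andP[yb /orP[]/eqP yE]; [rewrite yE Cab | rewrite yE eqxx in yb].
Qed.

Section ColourNeighbourhoods.

Variables (T : finType) (e : rel T) (C : T -> T -> nat).

Lemma CNP v c : reflect (exists2 x, e v x & C v x = c) (c \in CN e C v).
Proof.
rewrite /CN mem_undup; apply: (iffP mapP) => [[x] | [x vx <-]].
  by rewrite mem_filter mem_enum andbT => vx ->; exists x.
by exists x; rewrite // mem_filter mem_enum vx.
Qed.

Lemma size_CN_le v (s : seq nat) (A : {set T}) :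
  (forall y, e v y -> C v y \notin s -> y \in A) -> size (CN e C v) <= size s + #|A|.
Proof.
move=> outA; rewrite cardE -(size_map (C v)) -size_cat.
apply: uniq_leq_size (undup_uniq _) _ => c /CNP[y vy <-]; rewrite mem_cat.
by case: (boolP (C v y \in s)) => //= notin_s; rewrite map_f ?mem_enum ?outA.
Qed.

Lemma exists_nbr_colour_notin v (s : seq nat) (A : {set T}) :
  size s + #|A| < size (CN e C v) ->
  exists2 y, e v y & (C v y \notin s) && (y \notin A).
Proof.
move=> big; apply/exists_inP; apply: contraLR big; rewrite -leqNgt.
move/exists_inPn => noy; apply: size_CN_le => y vy notin_s.
by have := noy y vy; rewrite notin_s negbK.
Qed.

Lemma CN_union_card_le u w :
  CN_union_card e C u w <= size (CN e C u) + size (CN e C w).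
Proof. by rewrite -size_cat size_undup. Qed.

Definition mono_star (u : T) (g : nat) : {set T} := [set x | e u x && (C u x == g)].

Definition bichromatic (u w x : T) : bool := [&& e u x, e w x & C u x != C w x].

Definition bichromatic_covered (u w : T) (cs : seq nat) : Prop :=
  forall x, bichromatic u w x -> (C u x \in cs) || (C w x \in cs).

Lemma bichromatic_sub_stars u w cs : bichromatic_covered u w cs ->
  [set x | bichromatic u w x] \subset \bigcup_(c <- cs) (mono_star u c :|: mono_star w c).
Proof.
move=> cov; apply/subsetP => x; rewrite inE => bx.
have /and3P[ux wx _] := bx.
by have /orP[] := cov x bx => /mem_bigcup_seq-> //; rewrite !inE ux wx eqxx ?orbT.
Qed.

Lemma pair_colours_cover u w (Y : {set T}) cs : bichromatic_covered u w cs ->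
  exists2 s : seq nat, size s <= #|Y| + size cs &
    forall v y, (v == u) || (v == w) -> y \in Y -> e v y -> C v y \in s.
Proof.
move=> cov.
pose r y := if e u y && (C u y \notin cs) then C u y else C w y.
exists (cs ++ map r (enum Y)); first by rewrite size_cat size_map -cardE addnC.
move=> v y /orP[]/eqP-> yY vy; rewrite mem_cat.
all: have ry : r y \in map r (enum Y) by rewrite map_f ?mem_enum.
  by case: (boolP (C u y \in cs)) => //= notin_cs; rewrite /r vy notin_cs in ry.
rewrite /r in ry; case: ifP ry => [/andP[uy notin_cs] | _ ->]; last exact: orbT.
case: (eqVneq (C u y) (C w y)) => [<- -> | neq _]; first exact: orbT.
have bich : bichromatic u w y by rewrite /bichromatic uy vy neq.
by case/orP: (cov y bich) => [/(negP notin_cs) | ->].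
Qed.

End ColourNeighbourhoods.

Section NoRainbowC4.

Variables (T : finType) (e : rel T) (C : T -> T -> nat).

Definition rainbow_cycle4 (a b c d : T) : bool :=
  [&& uniq [:: a; b; c; d], [&& e a b, e b c, e c d & e d a] &
      uniq [:: C a b; C b c; C c d; C d a]].

Hypotheses (simple_e : simple_graph e) (coloring_C : edge_coloring e C).

Lemma edge_neq a b : e a b -> a != b.
Proof. by case: simple_e => irr _; apply: contraTneq => ->; rewrite irr. Qed.

Lemma edge_sym a b : e a b = e b a.
Proof. by case: simple_e => _; apply. Qed.

Hypothesis no_rainbow : forall a b c d, ~~ rainbow_cycle4 a b c d.

Lemma bichromatic_share_colour u w x y : u != w ->
  bichromatic e C u w x -> bichromatic e C u w y ->
  (C u y \in [:: C u x; C w x]) || (C w y \in [:: C u x; C w x]).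
Proof.
move=> uw bx /and3P[uy wy ny]; have /and3P[ux wx nx] := bx.
have [<-|xy] := eqVneq x y; first by rewrite !inE eqxx.
have := no_rainbow u x w y; rewrite /rainbow_cycle4 ux (edge_sym x) wx wy (edge_sym y) uy.
rewrite -(coloring_C wx) -(coloring_C uy) /= !inE !negb_or.
rewrite (edge_neq ux) uw (edge_neq uy) [x == w]eq_sym (edge_neq wx) xy (edge_neq wy).
rewrite nx [C w y == _]eq_sym ny /=.
by rewrite ![C _ x == _]eq_sym; do 4!case: (_ == _).
Qed.

Lemma exists_bichromatic_cover u w : u != w ->
  exists2 cs : seq nat, size cs <= 2 & bichromatic_covered e C u w cs.
Proof.
move=> uw; case: (pickP (bichromatic e C u w)) => [x bx | none].
  by exists [:: C u x; C w x] => // y; apply: bichromatic_share_colour.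
by exists [::] => // y; rewrite none.
Qed.

(* Otherwise u x w v is a rainbow C4. *)
Lemma mono_star_nbr_colour u v w g x :
  e u v -> e v w -> C u v != g -> C v w \notin [:: C v u; g] ->
  x \in mono_star e C u g -> x != w -> e w x -> C w x \in [:: g; C u v; C w v].
Proof.
move=> uv vw vg wcol; rewrite inE => /andP[ux /eqP xg] xw wx.
apply: contraNT (no_rainbow u x w v) => xcol.
move: wcol xcol; rewrite /rainbow_cycle4 ux (edge_sym x) wx (edge_sym w) vw (edge_sym v) uv.
rewrite -(coloring_C wx) -(coloring_C vw) -(coloring_C uv) xg /= !inE !negb_or.
move=> /andP[vwu vwg] /and3P[wxg wxuv wxvw].
have uw : u != w by apply: contraNneq vwu => <-; rewrite (coloring_C uv) eqxx.
have xv : x != v by apply: contraNneq vg => <-; rewrite xg.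
rewrite (edge_neq ux) uw (edge_neq uv) xw xv [w == v]eq_sym (edge_neq vw) vwu.
by rewrite ![g == _]eq_sym wxg vwg vg wxuv wxvw.
Qed.

Variable m : nat.
Hypothesis large_n : 105 * m + 81 <= #|T|.
Hypothesis union_large : forall a b, a != b -> #|T| - 1 - m <= CN_union_card e C a b.

Definition rich (a : T) : bool := #|T| - 1 - m <= 2 * size (CN e C a).

Lemma rich_or_rich a b : a != b -> rich a || rich b.
Proof. by move=> /union_large; have := CN_union_card_le e C a b; rewrite /rich; lia. Qed.

Lemma rich_but_one : exists b0, forall y, rich y || (y == b0).
Proof.
case: (pickP [pred y | ~~ rich y]) => [b /= poor_b | all_rich].
  exists b => y; have [->|yb] := eqVneq y b; first by rewrite orbT.
  by case/orP: (rich_or_rich yb) => [-> // | rich_b]; rewrite rich_b in poor_b.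
have /card_gt0P[y0 _] : 0 < #|T| by lia.
by exists y0 => y; have /negbFE -> := all_rich y.
Qed.

Lemma rich_many_colours a : rich a -> 3 < size (CN e C a).
Proof. by rewrite /rich; lia. Qed.

Lemma rich_mono_star_small u g : rich u -> #|mono_star e C u g| <= m + 4.
Proof.
move=> rich_u; rewrite leqNgt; apply/negP => big_star.
have [b0 rich_b0] := rich_but_one.
have [v uv /andP[vg vb0]] : exists2 v, e u v & (C u v \notin [:: g]) && (v \notin [set b0]).
  by apply: exists_nbr_colour_notin; rewrite cards1 ltnW ?rich_many_colours.
have {vb0}rich_v : rich v by move: (rich_b0 v) vb0; rewrite inE => /orP[] // ->.
have [w vw /andP[wcol _]] : exists2 w, e v w & (C v w \notin [:: C v u; g]) && (w \notin set0).
  by apply: exists_nbr_colour_notin; rewrite cards0 ltnW ?rich_many_colours.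
rewrite inE in vg.
have uw : u != w by apply: contraNneq wcol => ->; rewrite inE eqxx.
set S := mono_star e C u g; set Y := ~: (u |: S).
have inY x : x != u -> x \notin S -> x \in Y by rewrite !inE negb_or => -> ->.
have [cs cs2 cov] := exists_bichromatic_cover uw.
have [s size_s in_s] := pair_colours_cover Y cov.
have u_col x : e u x -> C u x \in g :: s.
  move=> ux; rewrite inE; case: (boolP (x \in S)) => [|xS].
    by rewrite inE ux => /eqP ->; rewrite eqxx.
  by rewrite in_s ?orbT ?eqxx // inY // eq_sym edge_neq.
have vY : v \in Y by apply: inY; rewrite ?inE ?uv // eq_sym edge_neq.
have sub : {subset CN e C u ++ CN e C w <= g :: s}.
  move=> c; rewrite mem_cat => /orP[]/CNP[x vx <-]; first exact: u_col.
  case: (eqVneq x u) vx => [-> wu | xu wx]; first by rewrite (coloring_C wu) u_col // edge_sym.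
  case: (boolP (x \in S)) => xS; last by rewrite inE in_s ?eqxx ?orbT ?inY.
  have xw : x != w by rewrite eq_sym edge_neq.
  have := mono_star_nbr_colour uv vw vg wcol xS xw wx; rewrite !inE.
  by case/or3P => /eqP ->; rewrite ?eqxx // in_s ?eqxx ?orbT // edge_sym.
have uS : u \notin S by rewrite inE; apply/negP => /andP[/edge_neq]; rewrite eqxx.
have := cardsC (u |: S); rewrite cardsU1 uS -/Y.
have := union_large uw; have := size_undup_subset sub; rewrite /CN_union_card /=.
by move: big_star; rewrite -/S; lia.
Qed.

Lemma card_bichromatic_rich u w : u != w -> rich u -> rich w ->
  #|[set x | bichromatic e C u w x]| <= 4 * (m + 4).
Proof.
move=> uw rich_u rich_w; have [cs cs2 cov] := exists_bichromatic_cover uw.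
apply: leq_trans (subset_leq_card (bichromatic_sub_stars cov)) _.
apply: leq_trans (card_bigcup_seq_le (K := 2 * (m + 4)) _ _) _; last first.
  by rewrite mulnA leq_mul2r (leq_mul2r 2 (size cs) 2) cs2 !orbT.
move=> c; rewrite (leq_trans (leq_card_setU _ _)) // mul2n -addnn.
by rewrite leq_add ?rich_mono_star_small.
Qed.

Definition rich_bichromatic (x u w : T) : bool :=
  [&& rich u, rich w & bichromatic e C u w x].

Lemma sum_rich_bichromatic_pair u w :
  \sum_x rich_bichromatic x u w <= (u != w) * (4 * (m + 4)).
Proof.
rewrite /rich_bichromatic; case rich_u: (rich u); case rich_w: (rich w) => /=;
  last 3 first; try by rewrite big1.
have [<- | uw] := eqVneq u w.
  by rewrite big1 // => x _; rewrite /bichromatic eqxx !andbF.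
by rewrite -card_set_sum mul1n card_bichromatic_rich.
Qed.

Lemma rich_vertex_pairs b0 x : (forall y, rich y || (y == b0)) -> rich x ->
  (#|T| - 3 - m) * (#|T| - 5 - m) <= 4 * \sum_u \sum_w rich_bichromatic x u w.
Proof.
move=> rich_b0 rich_x.
have rich_nb0 y : y != b0 -> rich y by case/orP: (rich_b0 y) => // ->.
set A := [set u | rich u && e x u].
have CN_A : size (CN e C x) <= 1 + #|A|.
  apply: (size_CN_le (s := [:: C x b0])) => y xy; rewrite !inE => yb0.
  by rewrite xy rich_nb0 //; apply: contraNneq yb0 => ->.
have CN_W u : u \in A -> size (CN e C x) <= 2 + \sum_w rich_bichromatic x u w.
  rewrite inE => /andP[rich_u xu]; rewrite -card_set_sum.
  apply: (size_CN_le (s := [:: C x b0; C x u])) => y xy.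
  rewrite !inE negb_or => /andP[yb0 yu].
  rewrite /rich_bichromatic /bichromatic rich_u rich_nb0 -?(edge_sym x) ?xu ?xy //=.
    by rewrite -(coloring_C xu) -(coloring_C xy) eq_sym yu.
  by apply: contraNneq yb0 => ->.
have : #|A| * (size (CN e C x) - 2) <= \sum_u \sum_w rich_bichromatic x u w.
  rewrite -sum_nat_const big_mkcond /=; apply: leq_sum => u _.
  by case: ifP => // /CN_W; rewrite -leq_subLR.
move: rich_x CN_A; rewrite /rich; nia.
Qed.

Lemma no_rainbow_C4_absurd : False.
Proof.
have [b0 rich_b0] := rich_but_one.
pose N := \sum_x \sum_u \sum_w (rich_bichromatic x u w : nat).
have N_le : N <= #|T| * (#|T|.-1 * (4 * (m + 4))).
  rewrite /N exchange_big /= -sum_nat_const; apply: leq_sum => u _.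
  rewrite exchange_big /= -(cardC1 u) -sum_nat_const.
  apply: (@leq_trans (\sum_w (u != w) * (4 * (m + 4)))).
    by apply: leq_sum => w _; apply: sum_rich_bichromatic_pair.
  rewrite [leqRHS]big_mkcond; apply: leq_sum => w _; rewrite !inE eq_sym.
  by case: (w != u); rewrite ?mul1n.
have N_ge : #|T|.-1 * ((#|T| - 3 - m) * (#|T| - 5 - m)) <= 4 * N.
  rewrite /N big_distrr /= -(cardC1 b0) -sum_nat_const big_mkcond /=.
  apply: leq_sum => x _; rewrite inE; case: eqP => // /eqP xb0.
  by apply: (rich_vertex_pairs rich_b0); case/orP: (rich_b0 x) => // /(negP xb0).
have n_pos : 0 < #|T|.-1 by lia.
have : #|T|.-1 * ((#|T| - 3 - m) * (#|T| - 5 - m)) <= #|T|.-1 * (16 * (m + 4) * #|T|).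
  by apply: leq_trans N_ge _; apply: leq_trans (leq_mul (leqnn 4) N_le) _; nia.
by rewrite leq_pmul2l //; nia.
Qed.

End NoRainbowC4.

Lemma exists_rainbow_cycle4 (T : finType) (e : rel T) (C : T -> T -> nat) m :
  simple_graph e -> edge_coloring e C -> 105 * m + 81 <= #|T| ->
  (forall a b, a != b -> #|T| - 1 - m <= CN_union_card e C a b) ->
  exists a b c d, rainbow_cycle4 e C a b c d.
Proof.
move=> simple_e coloring_C large_n union_large.
suff /existsP[a /existsP[b /existsP[c /existsP[d abcd]]]] :
    [exists a, exists b, exists c, exists d, rainbow_cycle4 e C a b c d].
  by exists a, b, c, d.
apply: contraT => none.
case: (no_rainbow_C4_absurd simple_e coloring_C _ large_n union_large).
move=> a b c d; apply: contra none => abcd.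
apply/existsP; exists a; apply/existsP; exists b.
by apply/existsP; exists c; apply/existsP; exists d.
Qed.

Section EdgeDeletion.

Variables (T : finType) (e : rel T) (C : T -> T -> nat) (D : {set {set T}}).

Definition delete_edges : rel T := fun u v => e u v && ([set u; v] \notin D).

Lemma simple_graph_delete : simple_graph e -> simple_graph delete_edges.
Proof.
case=> irr sym; split=> [u | u v]; first by rewrite /delete_edges irr.
by rewrite /delete_edges sym setUC.
Qed.

Lemma edge_coloring_delete : edge_coloring e C -> edge_coloring delete_edges C.
Proof. by move=> coloring_C u v /andP[uv _]; apply: coloring_C. Qed.

Hypotheses (simple_e : simple_graph e) (coloring_C : edge_coloring e C).

Lemma CN_delete_subset a :
  {subset CN e C a <= [seq pair_colour C P | P <- enum D] ++ CN delete_edges C a}.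
Proof.
move=> c /CNP[x ax <-]; rewrite mem_cat.
case: (boolP ([set a; x] \in D)) => aD.
  rewrite -(pair_colour2 (edge_neq simple_e ax) (coloring_C ax)).
  by rewrite map_f ?mem_enum.
by apply/orP; right; apply/CNP; exists x; rewrite // /delete_edges ax.
Qed.

Lemma CN_union_card_delete a b :
  CN_union_card e C a b <= #|D| + CN_union_card delete_edges C a b.
Proof.
rewrite cardE -(size_map (pair_colour C)) -size_cat; apply: size_undup_subset => c.
rewrite !mem_cat mem_undup mem_cat => /orP[] /CN_delete_subset; rewrite mem_cat.
  by case/orP=> ->; rewrite ?orbT.
by case/orP=> ->; rewrite ?orbT.
Qed.

End EdgeDeletion.

Lemma exists_rainbow_C4_notin (T : finType) (e : rel T) (C : T -> T -> nat)
    (F : {set {set {set T}}}) :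
  simple_graph e -> edge_coloring e C -> 105 * #|F| + 81 <= #|T| ->
  (forall u v, u != v -> #|T| - 1 <= CN_union_card e C u v) ->
  exists2 S, S \notin F & rainbow_C4 e C S.
Proof.
move=> simple_e coloring_C large_n union_large.
have [D cardD hitD] := hitting_set_exists F.
have [||a [b [c [d]]]] := exists_rainbow_cycle4 (simple_graph_delete D simple_e)
  (edge_coloring_delete (D := D) coloring_C) (m := #|D|); first by lia.
  move=> u v uv; have := union_large u v uv.
  by have := CN_union_card_delete D simple_e coloring_C u v; lia.
case/and3P=> abcd; rewrite /delete_edges.
case/and4P=> /andP[ab abD] /andP[bc bcD] /andP[cd cdD] /andP[da daD] colours.
exists (C4_edges a b c d); last by exists a, b, c, d; rewrite ab bc cd da.
have nonempty : C4_edges a b c d != set0 by apply/set0Pn; exists [set a; b]; rewrite !inE eqxx.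
have disjoint_D : [disjoint C4_edges a b c d & D].
  apply/pred0P => P /=; apply/andP => -[]; rewrite !inE -!orbA.
  by case/or4P => /eqP-> PD; rewrite PD in abD bcD cdD daD.
by apply: contraL disjoint_D => /hitD; apply.
Qed.

Theorem theorem6 (T : finType) (e : rel T) (C : T -> T -> nat) (k : nat) :
  simple_graph e -> edge_coloring e C ->
  0 < k ->
  105 * k - 24 <= #|T| ->
  (forall u v : T, u != v -> #|T| - 1 <= CN_union_card e C u v) ->
  exists F : {set {set {set T}}},
    #|F| = k /\ (forall S, S \in F -> rainbow_C4 e C S).
Proof.
move=> simple_e coloring_C k_gt0 large_n union_large.
suff grow j : j <= k -> exists F : {set {set {set T}}},
    #|F| = j /\ (forall S, S \in F -> rainbow_C4 e C S) by exact: grow.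
elim: j => [|j IH] jk; first by exists set0; split=> [|S]; rewrite ?cards0 ?inE.
have [F [cardF rainbow_F]] := IH (ltnW jk).
have [|S SF rainbow_S] := exists_rainbow_C4_notin (F := F) simple_e coloring_C _ union_large.
  by rewrite cardF; lia.
exists (S |: F); split=> [|S']; first by rewrite cardsU1 SF cardF.
by case/setU1P => [-> | /rainbow_F].
Qed.
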